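(* Let $T$ be a tree such that every vertex of $A_T$ has degree at most $3$ in $T$. Then $|D_T|\le 2|A_T|+1$, with equality only if $T[A_T\cup D_T]$ is connected, every vertex of $A_T$ has degree $3$, $A_T$ is independent and $C_T=\emptyset$; moreover $\nu(T)\geq \frac{n(T)-1}{3}$.
   Context: $\nu(T)$ is the matching number and $n(T)$ the number of vertices. Gallai–Edmonds sets: $D_T$ is the set of vertices not covered by at least one maximum matching of $T$, $A_T=N_T(D_T)\setminus D_T$, and $C_T=V(T)\setminus(A_T\cup D_T)$. *)

From mathcomp Require Import all_boot.
Set Implicit Arguments. Unset Strict Implicit. Unset Printing Implicit Defensive.

Section Graphs.
Variable T : finType.
Variable e : rel T.

Definition simple_graph := symmetric e /\ irreflexive e.

Definition has_cycle : Prop :=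
  exists (x : T) (p : seq T),
    [/\ uniq (x :: p), 2 <= size p, path e x p & e (last x p) x].

Definition connected_graph : Prop := forall x y : T, connect e x y.

Definition is_tree : Prop :=
  [/\ simple_graph, 0 < #|T|, connected_graph & ~ has_cycle].

Definition deg (x : T) : nat := #|[set y | e x y]|.

Definition is_edge (B : {set T}) : bool :=
  [exists x, exists y, e x y && (B == [set x; y])].

Definition is_matching (M : {set {set T}}) : bool :=
  [forall B in M, is_edge B] && trivIset M.

Definition nu : nat := \max_(M : {set {set T}} | is_matching M) #|M|.

Definition is_max_matching (M : {set {set T}}) : bool :=
  is_matching M && (#|M| == nu).

Definition GE_D : {set T} :=
  [set x | [exists M, is_max_matching M && (x \notin cover M)]].
Definition GE_A : {set T} :=
  [set x | (x \notin GE_D) && [exists y in GE_D, e y x]].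
Definition GE_C : {set T} := ~: (GE_A :|: GE_D).

Definition induced_connected (S : {set T}) : Prop :=
  forall x y, x \in S -> y \in S ->
    connect [rel u v | [&& e u v, u \in S & v \in S]] x y.

Definition independent (S : {set T}) : Prop :=
  forall x y, x \in S -> y \in S -> ~~ e x y.

End Graphs.

From mathcomp Require Import all_boot zify.

(* In a forest the Gallai-Edmonds set D is independent, and every maximum
   matching leaves only vertices of D uncovered and matches A injectively into D.
   Both facts come from one exchange argument: if some maximum matching misses y,
   any maximum matching M can be changed along a simple path starting at y into a
   maximum matching missing y, and acyclicity forces the only neighbour of y on
   that path to be the M-mate of y.
   Rooting the tree at a vertex of D, independence of D puts the parent of every
   other vertex of D in A, and a vertex of A of degree at most 3 has at most two
   children, so |D| <= 2|A| + 1.  Equality forces every vertex of A to have degree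
   3 with both children in D; then A is independent and, by induction on depth,
   every vertex lies in A or D.  Finally, for a maximum matching M,
   n = 2|M| + #uncovered <= 2|M| + |D| - |A| <= 2|M| + |A| + 1 <= 3|M| + 1. *)

Set Implicit Arguments. Unset Strict Implicit. Unset Printing Implicit Defensive.

Section Matchings.
Variables (T : finType) (e : rel T).
Hypotheses (sym_e : symmetric e) (irr_e : irreflexive e).
Implicit Types (M N : {set {set T}}) (B C : {set T}).

Lemma is_edgeP B : reflect (exists x y, e x y /\ B = [set x; y]) (is_edge e B).
Proof.
apply: (iffP existsP) => [[x /existsP[y /andP[exy /eqP->]]]|[x [y [exy ->]]]].
  by exists x, y.
by exists x; apply/existsP; exists y; rewrite exy eqxx.
Qed.

Lemma card_edge B : is_edge e B -> #|B| = 2.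
Proof.
case/is_edgeP => x [y [exy ->]]; rewrite cards2.
by case: (x =P y) exy => [->|//]; rewrite irr_e.
Qed.

Lemma mem_cover M B x : B \in M -> x \in B -> x \in cover M.
Proof. by move=> BM xB; apply/bigcupP; exists B. Qed.

Lemma coverU1 B M : cover (B |: M) = B :|: cover M.
Proof.
apply/setP => x; rewrite inE; apply/bigcupP/orP => [[C]|[xB|/bigcupP[C CM xC]]].
- by rewrite in_setU1 => /orP[/eqP->|/mem_cover CM /CM]; [left|right].
- by exists B; rewrite ?setU11.
- by exists C; rewrite ?setU1r.
Qed.

Lemma matching_edge M B : is_matching e M -> B \in M -> is_edge e B.
Proof. by case/andP => /forall_inP/(_ B). Qed.

Lemma matching_trivI M : is_matching e M -> trivIset M.
Proof. by case/andP. Qed.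

Lemma matching_eq M B1 B2 x : is_matching e M -> B1 \in M -> B2 \in M ->
  x \in B1 -> x \in B2 -> B1 = B2.
Proof.
move=> /matching_trivI tM B1M B2M xB1 xB2.
by rewrite -(def_pblock tM B1M xB1) (def_pblock tM B2M xB2).
Qed.

Lemma matching_adj M x y : is_matching e M -> [set x; y] \in M -> e x y.
Proof.
move=> mM /(matching_edge mM) xy_edge; have := card_edge xy_edge.
case/is_edgeP: xy_edge => u [w [euw E]]; rewrite cards2.
move: (set21 x y) (set22 x y); rewrite E !inE.
by do 2![case/orP => /eqP ->]; rewrite ?eqxx // sym_e.
Qed.

Lemma matching_sub M N : N \subset M -> is_matching e M -> is_matching e N.
Proof.
move=> sNM /andP[/forall_inP eM tM]; apply/andP; split; last exact: trivIsetS tM.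
by apply/forall_inP => B /(subsetP sNM) /eM.
Qed.

Lemma matchingU1 M x y : is_matching e M -> e x y ->
  x \notin cover M -> y \notin cover M ->
  is_matching e ([set x; y] |: M) /\ [set x; y] \notin M.
Proof.
move=> mM exy xM yM.
have disj : {in M, forall B, [disjoint [set x; y] & B]}.
  move=> B BM; rewrite -setI_eq0; apply/eqP/setP => z; rewrite !inE.
  apply/negP => /andP[/orP[]/eqP-> /(mem_cover BM)].
    by rewrite (negbTE xM).
  by rewrite (negbTE yM).
have M0 : set0 \notin M by apply/negP => /(matching_edge mM) /card_edge; rewrite cards0.
have [tU ->] := trivIsetU1 disj (matching_trivI mM) M0; split=> //.
apply/andP; split=> //; apply/forall_inP => B; rewrite in_setU1 => /orP[/eqP->|].
  by apply/is_edgeP; exists x, y.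
exact: matching_edge.
Qed.

Lemma max_matchingW M : is_max_matching e M -> is_matching e M.
Proof. by case/andP. Qed.

Lemma card_cover M : is_matching e M -> #|cover M| = 2 * #|M|.
Proof.
move=> mM; move: (mM) => /andP[_ /eqP <-]; rewrite mulnC -sum_nat_const.
by apply: eq_bigr => B /(matching_edge mM) /card_edge.
Qed.

Lemma card_matching_le_nu M : is_matching e M -> #|M| <= nu e.
Proof. exact: (@leq_bigmax_cond _ (is_matching e)). Qed.

Lemma exists_max_matching : exists M, is_max_matching e M.
Proof.
have m0 : is_matching e set0.
  by apply/andP; split; [apply/forall_inP | apply/trivIsetP] => B; rewrite inE.
exists [arg max_(M > set0 | is_matching e M) #|M|].
rewrite /is_max_matching /nu (bigmax_eq_arg _ m0) eqxx andbT.
by case: arg_maxnP.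
Qed.

Lemma max_matching_cover M x y : is_max_matching e M -> e x y ->
  (x \in cover M) || (y \in cover M).
Proof.
case/andP => mM /eqP cM exy; apply: contraT; rewrite negb_or => /andP[xM yM].
have [mU nin] := matchingU1 mM exy xM yM.
by have := card_matching_le_nu mU; rewrite cardsU1 nin cM ltnn.
Qed.

Definition exchange M B B' := B' |: (M :\ B).

Lemma cover_exchange M B B' : is_matching e M -> B \in M ->
  cover (exchange M B B') = B' :|: (cover M :\: B).
Proof. by move=> mM BM; rewrite coverU1 coverD1 // matching_trivI. Qed.

Lemma mem_exchange M B B' C : (C \in exchange M B B') != (C \in M) -> C = B' \/ C = B.
Proof.
rewrite in_setU1 in_setD1; case: (C =P B') => [->|_]; first by left.
by case: (C =P B) => [->|_]; [right | rewrite /= eqxx].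
Qed.

Lemma exchange_max M B x y : is_max_matching e M -> B \in M -> e x y ->
  x \notin cover M :\: B -> y \notin cover M :\: B ->
  is_max_matching e (exchange M B [set x; y]).
Proof.
case/andP => mM /eqP cM BM exy xM yM.
have mMB : is_matching e (M :\ B) by apply: matching_sub mM; apply: subD1set.
rewrite -coverD1 ?matching_trivI // in xM yM.
have [mU nin] := matchingU1 mMB exy xM yM.
by rewrite /is_max_matching mU /exchange cardsU1 nin -cM (cardsD1 B M) BM eqxx.
Qed.

Lemma card_exchangeD_lt M N B B' : B \in N -> B \notin M -> B' \in M ->
  #|exchange N B B' :\: M| < #|N :\: M|.
Proof.
move=> BN BM B'M; rewrite (cardsD1 B (N :\: M)) inE BM BN ltnS.
apply: subset_leq_card; apply/subsetP => C; rewrite !inE.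
case/andP => CM /orP[/eqP CB'|/andP[-> ->]]; last by rewrite CM.
by rewrite CB' B'M in CM.
Qed.

Definition mate M x := odflt x [pick y | [set x; y] \in M].

Lemma mate_in M x : is_matching e M -> x \in cover M -> [set x; mate M x] \in M.
Proof.
move=> mM /bigcupP[B BM xB].
have [y xyM] : exists y, [set x; y] \in M.
  have /is_edgeP[u [w [_ E]]] := matching_edge mM BM.
  move: xB; rewrite E !inE => /orP[]/eqP->; first by exists w; rewrite -E.
  by exists u; rewrite setUC -E.
by rewrite /mate; case: pickP => [//|/(_ y)]; rewrite xyM.
Qed.

Lemma mate_cover M x : is_matching e M -> x \in cover M -> mate M x \in cover M.
Proof. by move=> mM /(mate_in mM) /mem_cover; apply; apply: set22. Qed.

Lemma mate_inj M : is_matching e M -> {in cover M &, injective (mate M)}.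
Proof.
move=> mM x x' xM x'M E.
have xzM := mate_in mM xM; have x'zM := mate_in mM x'M; rewrite -E in x'zM.
have Exx' := matching_eq mM xzM x'zM (set22 _ _) (set22 _ _).
move: (set21 x (mate M x)); rewrite Exx' !inE => /orP[/eqP //|/eqP xz].
by have := matching_adj mM xzM; rewrite -xz irr_e.
Qed.

Hypothesis acyc_e : ~ has_cycle e.

Lemma path_nbr_head x p z : path e x p -> uniq (x :: p) -> z \in p -> e z x ->
  z = head x p.
Proof.
move=> pp up zp ezx; case/splitPr: zp pp up => p1 p2 pp up.
case: p1 pp up => [//|h p1] pp up.
exfalso; apply: acyc_e; exists x, (rcons (h :: p1) z); split.
- move: up; rewrite -cats1 -!cat_cons !cat_uniq => /and3P[-> hn _] /=.
  by rewrite andbT orbF; move: hn; rewrite /= negb_or => /andP[].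
- by rewrite size_rcons.
- by move: pp; rewrite rcons_path cat_path => /andP[-> /=] /andP[-> _].
- by rewrite last_rcons.
Qed.

(* [M'] is a maximum matching missing [y] that differs from [M] only on the
   simple path [y :: p], whose first edge (if any) is the [M]-edge at [y]. *)
Definition uncovers_along M M' y p : Prop :=
  [/\ is_max_matching e M', y \notin cover M', path e y p && uniq (y :: p),
      (if p is b :: _ then [set y; b] \in M else true)
    & forall B z, (B \in M') != (B \in M) -> z \in B -> z \in y :: p].

Lemma uncovers_along_cons M M1 y b c p : is_matching e M ->
  [set y; b] \in M -> e b c -> c != y -> uncovers_along M M1 c p ->
  uncovers_along M (exchange M1 [set y; b] [set b; c]) y (b :: c :: p).
Proof.
move=> mM ybM ebc cy [mM1 cM1 /andP[pp up] hd supp].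
have bc : b != c by apply: contraTneq ebc => ->; rewrite irr_e.
have yb : y != b by apply: contraTneq (matching_adj mM ybM) => ->; rewrite irr_e.
have bnp : b \notin c :: p.
  rewrite in_cons negb_or bc /=; apply/negP => bp.
  move: (path_nbr_head pp up bp ebc) hd; case: p pp up bp supp => //= d q _ _ _ _ <- cbM.
  have Ecb := matching_eq mM cbM ybM (set22 _ _) (set22 _ _).
  by move: (set21 c b); rewrite Ecb !inE (negbTE cy) eq_sym (negbTE bc).
have ynp : y \notin c :: p.
  apply/negP => yp; have pb : path e b (c :: p) by rewrite /= ebc.
  have ub : uniq (b :: c :: p) by rewrite cons_uniq bnp.
  have eyb : e y b by rewrite (matching_adj mM ybM).
  by move: (path_nbr_head pb ub yp eyb) cy => /= ->; rewrite eqxx.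
have ybM1 : [set y; b] \in M1.
  apply: contraT => ybM1; have := supp [set y; b] y; rewrite ybM (negbTE ybM1).
  by move=> /(_ isT (set21 _ _)) yp; rewrite yp in ynp.
have mM1m := max_matchingW mM1.
split.
- by apply: exchange_max; rewrite // !inE ?eqxx ?orbT ?(negbTE cM1) ?andbF.
- by rewrite cover_exchange // !inE eqxx /= orbF (negbTE yb) eq_sym (negbTE cy).
- by rewrite /= ebc pp (matching_adj mM ybM) /= in_cons negb_or yb ynp bnp.
- exact: ybM.
move=> B z hB zB; rewrite !in_cons.
have [E|/mem_exchange[]EB] := eqVneq (B \in exchange M1 [set y; b] [set b; c]) (B \in M1).
  by rewrite E in hB; rewrite -in_cons (supp _ _ hB zB) !orbT.
all: by move: zB; rewrite EB !inE => /orP[]->; rewrite ?orbT.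
Qed.

Lemma exists_uncovers_along M N y : is_max_matching e M -> is_max_matching e N ->
  y \notin cover N -> exists M' p, uncovers_along M M' y p.
Proof.
move=> mM; have mMm := max_matchingW mM.
have [n] := ubnP #|N :\: M|; elim: n => // n IH in N y *; rewrite ltnS => ltNM mN yN.
have mNm := max_matchingW mN.
have [yM|yM] := boolP (y \in cover M); last first.
  by exists M, [::]; split => //= B z; rewrite eqxx.
set b := mate M y; have ybM : [set y; b] \in M by apply: mate_in.
have eyb := matching_adj mMm ybM.
have bN : b \in cover N by have := max_matching_cover mN eyb; rewrite (negbTE yN).
set c := mate N b; have bcN : [set b; c] \in N by apply: mate_in.
have ebc := matching_adj mNm bcN.
have cy : c != y by apply: contraNneq yN => <-; apply: mem_cover bcN (set22 _ _).
have cyb : c \notin [set y; b].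
  by rewrite !inE negb_or cy; apply: contraTneq ebc => ->; rewrite irr_e.
have bcM : [set b; c] \notin M.
  apply: contra cyb => bcM; rewrite -(matching_eq mMm bcM ybM (set21 _ _) (set22 _ _)).
  exact: set22.
(* Trading N's edge [b; c] for M's edge [y; b] moves the uncovered vertex from y
   to c and brings N closer to M; recurse from c and prepend y, b to the path. *)
have mN1 : is_max_matching e (exchange N [set b; c] [set y; b]).
  by apply: exchange_max; rewrite // !inE ?(negbTE yN) ?andbF ?eqxx.
have cN1 : c \notin cover (exchange N [set b; c] [set y; b]).
  by rewrite cover_exchange // in_setU (negbTE cyb) !inE eqxx orbT.
have ltN1 := card_exchangeD_lt bcN bcM ybM.
have [M1 [p hp]] := IH _ c (leq_trans ltN1 ltNM) mN1 cN1.
by exists (exchange M1 [set y; b] [set b; c]), (b :: c :: p); apply: uncovers_along_cons.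
Qed.

Lemma uncovers_along_nbr M M' y p B z : uncovers_along M M' y p ->
  (B \in M') != (B \in M) -> z \in B -> e z y -> [set y; z] \in M.
Proof.
case=> _ _ /andP[pp up] hd supp hB zB ezy; have := supp _ _ hB zB.
rewrite in_cons => /orP[/eqP zy|zp]; first by rewrite zy irr_e in ezy.
by move: (path_nbr_head pp up zp ezy) hd; case: p pp up zp supp => //= b q _ _ _ _ <-.
Qed.

End Matchings.

Section GallaiEdmondsForest.
Variables (T : finType) (e : rel T).
Hypotheses (sym_e : symmetric e) (irr_e : irreflexive e) (acyc_e : ~ has_cycle e).
Local Notation D := (GE_D e).
Local Notation A := (GE_A e).

Lemma GE_DP x : reflect (exists2 M, is_max_matching e M & x \notin cover M) (x \in D).
Proof.
rewrite inE; apply: (iffP existsP) => [[M /andP[]]|[M mM xM]]; first by exists M.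
by exists M; rewrite mM xM.
Qed.

Lemma GE_A_notin_D a : a \in A -> a \notin D.
Proof. by rewrite inE => /andP[]. Qed.

Lemma GE_A_cover M a : is_max_matching e M -> a \in A -> a \in cover M.
Proof.
move=> mM /GE_A_notin_D aD; apply: contraT => aM; case/negP: aD.
by apply/GE_DP; exists M.
Qed.

Lemma GE_D_independent : independent e D.
Proof.
move=> x y /GE_DP[M mM xM] /GE_DP[N mN yN]; apply/negP => exy.
have [M' [p shift]] := exists_uncovers_along sym_e irr_e acyc_e mM mN yN.
have [mM' yM' _ _ _] := shift.
suff xM' : x \notin cover M'.
  by have := max_matching_cover irr_e mM' exy; rewrite (negbTE xM') (negbTE yM').
apply/bigcupP => -[B BM' xB].
have BM : B \notin M by apply: contra xM => BM; apply: mem_cover BM xB.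
have yxM : [set y; x] \in M.
  by apply: (uncovers_along_nbr irr_e acyc_e shift _ xB exy); rewrite BM' (negbTE BM).
by rewrite (mem_cover yxM (set22 _ _)) in xM.
Qed.

Lemma GE_A_mate M a : is_max_matching e M -> a \in A -> mate M a \in D.
Proof.
move=> mM aA; have mMm := max_matchingW mM.
set z := mate M a; have azM : [set a; z] \in M by apply: mate_in mMm (GE_A_cover mM aA).
have eaz := matching_adj sym_e irr_e mMm azM.
have := aA; rewrite inE => /andP[_ /existsP[y /andP[yD eya]]].
have eay : e a y by rewrite sym_e.
have [N mN yN] := GE_DP _ yD.
have [M' [p shift]] := exists_uncovers_along sym_e irr_e acyc_e mM mN yN.
have [mM' yM' _ _ _] := shift.
have [azM'|azM'] := boolP ([set a; z] \in M'); last first.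
  have yaM : [set y; a] \in M.
    apply: (uncovers_along_nbr irr_e acyc_e shift _ (set21 a z) eay).
    by rewrite azM (negbTE azM').
  have Eya := matching_eq mMm yaM azM (set22 _ _) (set21 _ _).
  move: (set22 a z); rewrite -Eya => /set2P[->//|za].
  by rewrite za irr_e in eaz.
have mM'm := max_matchingW mM'.
apply/GE_DP; exists (exchange M' [set a; z] [set a; y]).
  by apply: (exchange_max irr_e); rewrite // !inE ?eqxx ?(negbTE yM') ?andbF.
rewrite (cover_exchange _ mM'm azM') !inE eqxx orbT /= orbF negb_or.
apply/andP; split; first by apply: contraTneq eaz => ->; rewrite irr_e.
by apply: contraNneq yM' => <-; apply: mem_cover azM' (set22 _ _).
Qed.

Lemma card_uncovered_add_GE_A M : is_max_matching e M -> #|~: cover M| + #|A| <= #|D|.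
Proof.
move=> mM; have mMm := max_matchingW mM.
have injA := sub_in2 (fun a => GE_A_cover mM) (mate_inj sym_e irr_e mMm).
rewrite -(card_in_imset injA) -cardsUI.
have -> : ~: cover M :&: mate M @: A = set0.
  apply/setP => z; rewrite !inE; apply/negP => /andP[zM /imsetP[a aA za]].
  by rewrite za (mate_cover mMm) ?(GE_A_cover mM) in zM.
rewrite cards0 addn0; apply: subset_leq_card; apply/subsetP => z.
rewrite inE => /orP[zM|/imsetP[a aA ->]]; last exact: GE_A_mate.
by apply/GE_DP; exists M; rewrite // -in_setC.
Qed.

Lemma card_GE_A_le M : is_max_matching e M -> #|A| <= #|M|.
Proof.
move=> mM; have mMm := max_matchingW mM.
have injA := sub_in2 (fun a => GE_A_cover mM) (mate_inj sym_e irr_e mMm).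
have disj : A :&: mate M @: A = set0.
  apply/setP => z; rewrite in_setI in_set0; apply/negP => /andP[zA /imsetP[a aA za]].
  by move: (GE_A_notin_D zA); rewrite za GE_A_mate.
rewrite -(leq_pmul2l (isT : 0 < 2)) -(card_cover irr_e mMm) mul2n -addnn.
rewrite -{2}(card_in_imset injA) -cardsUI disj cards0 addn0.
apply: subset_leq_card; apply/subsetP => z.
rewrite inE => /orP[/(GE_A_cover mM)//|/imsetP[a aA ->]].
by rewrite (mate_cover mMm) ?(GE_A_cover mM).
Qed.

End GallaiEdmondsForest.

Section RootedTree.
Variables (T : finType) (e : rel T).
Hypothesis tree : is_tree e.
Variable r : T.

Let sym_e : symmetric e. Proof. by case: tree => -[]. Qed.
Let irr_e : irreflexive e. Proof. by case: tree => -[]. Qed.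
Let acyc_e : ~ has_cycle e. Proof. by case: tree. Qed.

Definition walk_to v n := [exists p : n.-tuple T, path e r p && (last r p == v)].

Lemma exists_walk_to v : exists n, walk_to v n.
Proof.
case: tree => _ _ conn _; have /connectP[p pp vE] := conn r v.
by exists (size p); apply/existsP; exists (in_tuple p); rewrite /= pp vE eqxx.
Qed.

Definition depth v := ex_minn (exists_walk_to v).

Lemma exists_lower_nbr v : v != r -> exists u, e v u && (depth u < depth v).
Proof.
move=> vr; rewrite /depth; case: ex_minnP => n /existsP[[s /= /eqP sz]] /andP[ps].
case/lastP: s sz ps => [|s x] sz; first by move=> _ /eqP /= rv; rewrite rv eqxx in vr.
rewrite rcons_path last_rcons => /andP[ps ex] /eqP xv _; subst x.
exists (last r s); rewrite sym_e ex /=.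
case: ex_minnP => m _ /(_ (size s)) hm; apply: leq_ltn_trans (hm _) _.
  by apply/existsP; exists (in_tuple s); rewrite /= ps eqxx.
by rewrite -sz size_rcons.
Qed.

Definition parent v := odflt v [pick u | e v u && (depth u < depth v)].

Lemma parentP v : v != r -> e v (parent v) /\ depth (parent v) < depth v.
Proof.
move=> /exists_lower_nbr[u hu]; rewrite /parent.
by case: pickP => [u' /andP[]|/(_ u)]; [split | rewrite hu].
Qed.

Lemma parent_parent_neq v : v != r -> parent v != r -> parent (parent v) != v.
Proof.
move=> vr pvr; have [_ dv] := parentP vr; have [_ dpv] := parentP pvr.
by apply: contraTneq (ltn_trans dpv dv) => ->; rewrite ltnn.
Qed.

Lemma card_nbr_parent v : v != r -> #|[set w | e v w] :\ parent v| = (deg e v).-1.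
Proof.
by move=> /parentP[evp _]; rewrite /deg (cardsD1 (parent v) [set w | e v w]) inE evp.
Qed.

Local Notation D := (GE_D e).
Local Notation A := (GE_A e).

Hypothesis rD : r \in D.

Lemma GE_A_neq_root a : a \in A -> a != r.
Proof. by move=> /GE_A_notin_D; apply: contraNneq => ->. Qed.

Lemma parent_GE_D v : v \in D :\ r -> parent v \in A.
Proof.
rewrite in_setD1 => /andP[/parentP[evp _] vD]; rewrite inE; apply/andP; split.
  by apply: contraL evp; apply: GE_D_independent vD.
by apply/existsP; exists v; rewrite vD evp.
Qed.

Definition children a := [set v in D :\ r | parent v == a].

Lemma children_sub a : a \in A -> children a \subset [set w | e a w] :\ parent a.
Proof.
move=> aA; apply/subsetP => v; rewrite inE => /andP[vDr /eqP pva].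
have vr : v != r by move: vDr; rewrite in_setD1 => /andP[].
have [evp _] := parentP vr; rewrite -pva in aA *.
by rewrite !inE sym_e evp andbT eq_sym parent_parent_neq // GE_A_neq_root.
Qed.

Lemma card_GE_D_children : #|D :\ r| = \sum_(a in A) #|children a|.
Proof.
rewrite -sum1_card (partition_big parent (mem A)) /=; last exact: parent_GE_D.
by apply: eq_bigr => a _; rewrite -sum1_card; apply: eq_bigl => v; rewrite !inE.
Qed.

Hypothesis hdeg : forall x, x \in A -> deg e x <= 3.

Lemma card_children_le a : a \in A -> #|children a| <= 2.
Proof.
move=> aA; rewrite (leq_trans (subset_leq_card (children_sub aA))) //.
by rewrite card_nbr_parent ?GE_A_neq_root //; have := hdeg aA; case: (deg e a).
Qed.

Lemma card_GE_D_le : #|D| <= 2 * #|A| + 1.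
Proof.
rewrite (cardsD1 r D) rD card_GE_D_children addnC leq_add2r mulnC -sum_nat_const.
exact: leq_sum card_children_le.
Qed.

Hypothesis heq : #|D| = 2 * #|A| + 1.

Lemma card_children_eq a : a \in A -> #|children a| = 2.
Proof.
move=> aA; have [_] := leqif_sum (fun a (aA : a \in A) => leqif_eq (card_children_le aA)).
rewrite -card_GE_D_children sum_nat_const.
have -> : #|D :\ r| == #|A| * 2 by move: heq; rewrite (cardsD1 r D) rD; lia.
by move/esym/forall_inP/(_ a aA)/eqP.
Qed.

Lemma GE_A_deg3 a : a \in A -> deg e a = 3.
Proof.
move=> aA; have := subset_leq_card (children_sub aA).
by rewrite card_children_eq // card_nbr_parent ?GE_A_neq_root //; have := hdeg aA; lia.
Qed.

Lemma GE_A_nbr_D a w : a \in A -> e a w -> w != parent a -> w \in D.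
Proof.
move=> aA eaw wp; have Ech : #|children a| = #|[set w | e a w] :\ parent a|.
  by rewrite card_children_eq // card_nbr_parent ?GE_A_neq_root // GE_A_deg3.
have := subset_cardP Ech (children_sub aA) w.
by rewrite !inE eaw wp => /andP[/andP[_ ->]].
Qed.

Lemma GE_A_independent : independent e A.
Proof.
move=> a a' aA a'A; apply/negP => eaa'.
have pa : parent a = a'.
  by apply/eqP; rewrite eq_sym; apply: contraNT (GE_A_notin_D a'A); apply: GE_A_nbr_D.
have pa' : parent a' = a.
  apply/eqP; rewrite eq_sym; apply: contraNT (GE_A_notin_D aA); apply: GE_A_nbr_D => //.
  by rewrite sym_e.
have := parent_parent_neq (GE_A_neq_root aA); rewrite pa pa' eqxx.
by move/(_ (GE_A_neq_root a'A)).
Qed.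

Lemma mem_GE_AD v : v \in A :|: D.
Proof.
suff key k : forall v, depth v <= k -> v \in A :|: D by apply: key (leqnn _).
elim: k => [|k IH] {}v dv; have [->|vr] := eqVneq v r; rewrite ?in_setU ?rD ?orbT //;
  have [evp dp] := parentP vr.
  by move: dv; rewrite leqn0 => /eqP dv0; rewrite dv0 in dp.
have /IH /setUP[pA|pD] : depth (parent v) <= k by rewrite -ltnS (leq_trans dp dv).
  apply/orP; right; apply: (GE_A_nbr_D pA); first by rewrite sym_e.
  by rewrite eq_sym (parent_parent_neq vr (GE_A_neq_root pA)).
have [_|vD] := boolP (v \in D); rewrite ?orbT // orbF inE vD /=.
by apply/existsP; exists (parent v); rewrite pD sym_e evp.
Qed.

Lemma GE_C_eq0 : GE_C e = set0.
Proof. by apply/setP => v; rewrite in_setC mem_GE_AD in_set0. Qed.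

Lemma induced_connected_GE_AD : induced_connected e (A :|: D).
Proof.
move=> x y _ _; case: tree => _ _ conn _.
rewrite (eq_connect (_ : _ =2 e)) => [|u w]; first exact: conn.
by rewrite /= !mem_GE_AD !andbT.
Qed.

End RootedTree.

Theorem mainTheorem3 (T : finType) (e : rel T) :
  is_tree e ->
  (forall x, x \in GE_A e -> deg e x <= 3) ->
  [/\ #|GE_D e| <= 2 * #|GE_A e| + 1,
      (#|GE_D e| = 2 * #|GE_A e| + 1 ->
         [/\ induced_connected e (GE_A e :|: GE_D e),
             (forall x, x \in GE_A e -> deg e x = 3),
             independent e (GE_A e)
           & GE_C e = set0])
    & #|T| - 1 <= 3 * nu e].
Proof.
move=> tree hdeg; have [[sym_e irr_e] _ _ acyc_e] := tree.
have [M mM] := exists_max_matching e; have /andP[mMm /eqP <-] := mM.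
have uncovM := card_uncovered_add_GE_A sym_e irr_e acyc_e mM.
have AM := card_GE_A_le sym_e irr_e acyc_e mM.
have coverM := card_cover irr_e mMm.
have TM := cardsC (cover M).
have [D0|[r rD]] := set_0Vmem (GE_D e).
  by rewrite D0 cards0 in uncovM *; split; lia.
have DA := card_GE_D_le tree rD hdeg.
split=> // [tight|]; last by lia.
split; [exact: (induced_connected_GE_AD tree rD hdeg tight)
       | exact: (GE_A_deg3 tree rD hdeg tight)
       | exact: (GE_A_independent tree rD hdeg tight)
       | exact: (GE_C_eq0 tree rD hdeg tight)].
Qed.
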